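(* Let $p\ge 1$, $c>0$ and $\beta>0$ be constants. The boundary value problem $$x'''+c\,x^p\, x''=0\ \text{ on } [0,\infty),\qquad x(0)=0=x'(0),\qquad \lim_{t\to\infty}x'(t)=\beta$$ has at most one solution (i.e., its solution is unique). *)

From Stdlib Require Import Reals.
From Coquelicot Require Import Coquelicot.
Open Scope R_scope.

(* Stdlib's Rpower gives Rpower 0 p = 1, so we patch the value at 0.
   Values for a < 0 are irrelevant: solutions are required to be >= 0. *)
Definition rpow (a p : R) : R := if Rle_dec a 0 then 0 else Rpower a p.

(* x is a solution of  x''' + c x^p x'' = 0 on [0,oo),
   x(0) = 0, x'(0) = 0 (right derivative at 0), lim_{t->oo} x'(t) = beta.
   x1, x2, x3 are the first three derivatives of x on (0,oo). *)
Definition is_solution (p c beta : R) (x : R -> R) : Prop :=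
  exists x1 x2 x3 : R -> R,
    (forall t, 0 <= t -> 0 <= x t) /\
    (forall t, 0 < t ->
       is_derive x t (x1 t) /\ is_derive x1 t (x2 t) /\ is_derive x2 t (x3 t) /\
       x3 t + c * rpow (x t) p * x2 t = 0) /\
    x 0 = 0 /\
    filterlim (fun h => (x h - x 0) / h) (at_right 0) (locally 0) /\
    is_lim x1 p_infty beta.

(* Every solution has x'' > 0 on (0, oo): x'' solves a linear first-order equation, so it
   vanishes nowhere or everywhere, and x'' <= 0 would make x' decrease to beta, forcing
   x(t) >= beta t against x'(0) = 0.  Hence x' increases to beta, x'' decreases to a finite
   limit a > 0 at 0+, and x solves the initial value problem x(0) = x'(0) = 0, x''(0) = a.
   For p >= 1 the nonlinearity is Lipschitz on bounded sets, so a Gronwall estimate on the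
   squared distance of two solutions of that problem shows it has at most one solution.
   Finally x(t) |-> l x(l^p t) preserves the equation, multiplying x''(0+) by l^(1+2p) and
   x'(oo) by l^(1+p): rescaling one solution to match the other's x''(0+) makes them equal,
   and then x'(oo) = beta forces l = 1. *)

From Stdlib Require Import Reals Lra Classical.
From Coquelicot Require Import Coquelicot.
Open Scope R_scope.

(** * Limits and derivatives on the half-line *)

Section RealFilterlim.

Context {T : Type} {F : (T -> Prop) -> Prop} {FF : Filter F}.

Lemma filterlim_Rplus_fun (f g : T -> R) (a b : R) :
  filterlim f F (locally a) -> filterlim g F (locally b) ->
  filterlim (fun t => f t + g t) F (locally (a + b)).
Proof. intros Hf Hg; exact (filterlim_comp_2 f g Rplus Hf Hg (filterlim_plus a b)). Qed.

Lemma filterlim_Rminus_fun (f g : T -> R) (a b : R) :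
  filterlim f F (locally a) -> filterlim g F (locally b) ->
  filterlim (fun t => f t - g t) F (locally (a - b)).
Proof.
  intros Hf Hg.
  exact (filterlim_comp_2 f (fun t => - g t) Rplus Hf
           (filterlim_comp _ _ _ g Ropp _ _ _ Hg (filterlim_opp b)) (filterlim_plus a (- b))).
Qed.

Lemma filterlim_Rmult_fun (f g : T -> R) (a b : R) :
  filterlim f F (locally a) -> filterlim g F (locally b) ->
  filterlim (fun t => f t * g t) F (locally (a * b)).
Proof. intros Hf Hg; exact (filterlim_comp_2 f g Rmult Hf Hg (filterlim_mult a b)). Qed.

End RealFilterlim.

Lemma at_right0_interval (P : R -> Prop) (d : R) :
  0 < d -> (forall t, 0 < t < d -> P t) -> at_right 0 P.
Proof.
  intros Hd HP. exists (mkposreal d Hd). intros t Ht Ht0. apply HP.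
  change (Rabs (t - 0) < d) in Ht. rewrite Rminus_0_r, Rabs_right in Ht; lra.
Qed.

Lemma filterlim_at_right0_scal (m : R) :
  0 < m -> filterlim (fun t => m * t) (at_right 0) (at_right 0).
Proof.
  intros Hm P [d Hd]. apply (at_right0_interval _ (d / m)).
  - apply Rdiv_lt_0_compat; [apply cond_pos | exact Hm].
  - intros t Ht. apply Hd; [| nra].
    change (Rabs (m * t - 0) < d). rewrite Rminus_0_r, Rabs_right by nra.
    apply (Rmult_lt_reg_r (/ m)); [apply Rinv_0_lt_compat; lra|].
    replace (m * t * / m) with t by (field; lra). unfold Rdiv in Ht; lra.
Qed.

Lemma filterlim_at_right0_id : filterlim (fun t : R => t) (at_right 0) (locally 0).
Proof. intros P [d Hd]. exists d. intros t Ht _. exact (Hd t Ht). Qed.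

Lemma is_derive_eq (f : R -> R) (t l l' : R) : is_derive f t l -> l = l' -> is_derive f t l'.
Proof. now intros H <-. Qed.

Lemma is_derive_mult_exp_lin (f : R -> R) (t df k : R) :
  is_derive f t df ->
  is_derive (fun u => f u * exp (k * u)) t ((df + k * f t) * exp (k * t)).
Proof.
  intros Hf. apply (is_derive_eq _ _ _ _ (is_derive_mult f (fun u => exp (k * u)) t df
    (k * exp (k * t)) Hf ltac:(auto_derive; [auto | ring]) Rmult_comm)).
  unfold plus, mult; simpl; ring.
Qed.

Lemma MVT_pos (f df : R -> R) (a b : R) :
  0 < a <= b -> (forall t, 0 < t -> is_derive f t (df t)) ->
  exists c, a <= c <= b /\ f b - f a = df c * (b - a).
Proof.
  intros Hab Hd.
  assert (Hd' : forall t, Rmin a b <= t <= Rmax a b -> is_derive f t (df t)).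
  { intros t Ht. rewrite Rmin_left in Ht by lra. apply Hd; lra. }
  destruct (MVT_gen f a b df) as [c [Hc Hfc]].
  - intros t Ht. apply Hd'; lra.
  - intros t Ht. apply continuity_pt_filterlim, (ex_derive_continuous f).
    exists (df t). exact (Hd' t Ht).
  - exists c. rewrite Rmin_left, Rmax_right in Hc by lra. auto.
Qed.

Lemma increment_le (f df : R -> R) (a b K : R) :
  0 < a <= b -> (forall t, 0 < t -> is_derive f t (df t)) ->
  (forall t, a <= t <= b -> df t <= K) -> f b - f a <= K * (b - a).
Proof.
  intros Hab Hd HK. destruct (MVT_pos f df a b Hab Hd) as [c [Hc ->]].
  apply Rmult_le_compat_r; [lra | auto].
Qed.

Lemma increment_ge (f df : R -> R) (a b K : R) :
  0 < a <= b -> (forall t, 0 < t -> is_derive f t (df t)) ->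
  (forall t, a <= t <= b -> K <= df t) -> K * (b - a) <= f b - f a.
Proof.
  intros Hab Hd HK. destruct (MVT_pos f df a b Hab Hd) as [c [Hc ->]].
  apply Rmult_le_compat_r; [lra | auto].
Qed.

(** * Differential inequalities *)

Lemma exp_weighted_nonincreasing (g dg : R -> R) (K a b : R) :
  0 < a <= b -> (forall t, 0 < t -> is_derive g t (dg t)) ->
  (forall t, a <= t <= b -> dg t <= K * g t) ->
  g b * exp (- K * b) <= g a * exp (- K * a).
Proof.
  intros Hab Hd HK.
  enough (g b * exp (- K * b) - g a * exp (- K * a) <= 0 * (b - a)) by lra.
  apply (increment_le (fun t => g t * exp (- K * t))
           (fun t => (dg t + - K * g t) * exp (- K * t))); [exact Hab | |].
  - intros t Ht. exact (is_derive_mult_exp_lin g t (dg t) (- K) (Hd t Ht)).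
  - intros t Ht. specialize (HK t Ht). pose proof (exp_pos (- K * t)). nra.
Qed.

Lemma le_from_0_of_deriv_le (f df : R -> R) (K u : R) :
  0 < u -> filterlim f (at_right 0) (locally 0) ->
  (forall t, 0 < t -> is_derive f t (df t)) ->
  (forall t, 0 < t <= u -> df t <= K) -> f u <= K * u.
Proof.
  intros Hu Hf Hd HK.
  assert (Hlim := filterlim_Rplus_fun _ _ _ _ Hf (filterlim_Rmult_fun _ _ K _
    (filterlim_const K) (filterlim_Rminus_fun _ _ u _ (filterlim_const u) filterlim_at_right0_id))).
  enough (Rbar_le (f u) (0 + K * (u - 0))) by (simpl in *; lra).
  refine (filterlim_le (fun _ => f u) _ (f u) (0 + K * (u - 0)) (at_right0_interval _ u Hu _)
           (filterlim_const (f u)) Hlim).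
  intros e He. simpl.
  enough (f u - f e <= K * (u - e)) by lra.
  apply (increment_le f df); [lra | exact Hd |]. intros t Ht; apply HK; lra.
Qed.

Lemma ge_from_0_of_deriv_ge (f df : R -> R) (K u : R) :
  0 < u -> filterlim f (at_right 0) (locally 0) ->
  (forall t, 0 < t -> is_derive f t (df t)) ->
  (forall t, 0 < t <= u -> K <= df t) -> K * u <= f u.
Proof.
  intros Hu Hf Hd HK.
  assert (Hlim := filterlim_Rplus_fun _ _ _ _ Hf (filterlim_Rmult_fun _ _ K _
    (filterlim_const K) (filterlim_Rminus_fun _ _ u _ (filterlim_const u) filterlim_at_right0_id))).
  enough (Rbar_le (0 + K * (u - 0)) (f u)) by (simpl in *; lra).
  refine (filterlim_le _ (fun _ => f u) (0 + K * (u - 0)) (f u) (at_right0_interval _ u Hu _) Hlim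
           (filterlim_const (f u))).
  intros e He. simpl.
  enough (K * (u - e) <= f u - f e) by lra.
  apply (increment_ge f df); [lra | exact Hd |]. intros t Ht; apply HK; lra.
Qed.

Lemma exp_le_1 (z : R) : z <= 0 -> exp z <= 1.
Proof.
  intros [Hz | ->]; [| rewrite exp_0; lra].
  rewrite <- exp_0. left. exact (exp_increasing _ _ Hz).
Qed.

Lemma gronwall_vanishing (S dS : R -> R) (K t : R) :
  0 < t -> 0 <= K -> (forall u, 0 < u -> is_derive S u (dS u)) ->
  (forall u, 0 < u <= t -> dS u <= K * S u) -> (forall u, 0 < u -> 0 <= S u) ->
  filterlim S (at_right 0) (locally 0) -> S t = 0.
Proof.
  intros Ht HK Hd HdS HS Hlim.
  assert (Hexp : 0 < exp (- K * t)) by apply exp_pos.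
  enough (Hle : Rbar_le (S t * exp (- K * t)) 0) by (simpl in Hle; pose proof (HS t Ht); nra).
  refine (filterlim_le (fun _ => S t * exp (- K * t)) S (S t * exp (- K * t)) 0
            (at_right0_interval _ t Ht _) (filterlim_const _) Hlim).
  intros e He. simpl.
  assert (S t * exp (- K * t) <= S e * exp (- K * e)).
  { apply (exp_weighted_nonincreasing S dS); [lra | exact Hd |].
    intros u Hu; apply HdS; lra. }
  assert (exp (- K * e) <= 1) by (apply exp_le_1; nra).
  pose proof (HS e (proj1 He)). nra.
Qed.

Lemma linear_ode_zero_propagation (f df q : R -> R) (t0 : R) :
  (forall t, 0 < t -> is_derive f t (df t)) -> (forall t, 0 < t -> df t = - q t * f t) ->
  (forall t, 0 < t -> 0 <= q t) ->
  (forall a b, 0 < a <= b -> exists K, forall t, a <= t <= b -> q t <= K) ->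
  0 < t0 -> f t0 = 0 -> forall u, 0 < u -> f u = 0.
Proof.
  intros Hd Hode Hq Hbound Ht0 Hf0 u Hu.
  set (g t := f t * f t).
  assert (Hdg : forall t, 0 < t -> is_derive g t (- 2 * q t * g t)).
  { intros t Ht.
    apply (is_derive_eq _ _ _ _ (is_derive_mult f f t _ _ (Hd t Ht) (Hd t Ht) Rmult_comm)).
    rewrite (Hode t Ht). unfold g, plus, mult; simpl; ring. }
  enough (g u <= 0) by (unfold g in *; nra).
  (* Forward in time f^2 is nonincreasing; backward, a bound q <= K makes f^2 e^(2Kt)
     nondecreasing. *)
  destruct (Rle_or_lt t0 u) as [Hle | Hlt].
  - assert (Hdec : g u * exp (- 0 * u) <= g t0 * exp (- 0 * t0)).
    { apply (exp_weighted_nonincreasing g (fun t => - 2 * q t * g t)); [lra | exact Hdg |].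
      intros t Ht. pose proof (Hq t ltac:(lra)). assert (0 <= g t) by (unfold g; nra). nra. }
    unfold g at 2 in Hdec. rewrite Hf0, !Rmult_0_l, Ropp_0, !Rmult_0_l, exp_0 in Hdec. lra.
  - destruct (Hbound u t0 ltac:(lra)) as [K HK].
    assert (Hinc : - g t0 * exp (- (- 2 * K) * t0) <= - g u * exp (- (- 2 * K) * u)).
    { apply (exp_weighted_nonincreasing (fun t => - g t) (fun t => - (- 2 * q t * g t)));
        [lra | intros t Ht; apply (is_derive_opp g), Hdg, Ht |].
      intros t Ht. pose proof (HK t Ht). assert (0 <= g t) by (unfold g; nra). nra. }
    unfold g at 1 in Hinc. rewrite Hf0, Rmult_0_l, Ropp_0, Rmult_0_l in Hinc.
    pose proof (exp_pos (- (- 2 * K) * u)). nra.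
Qed.

Lemma nonpos_propagates (f : R -> R) :
  (forall t, 0 < t -> continuity_pt f t) ->
  (forall t0, 0 < t0 -> f t0 = 0 -> forall u, 0 < u -> f u = 0) ->
  forall u v, 0 < u -> 0 < v -> f u <= 0 -> f v <= 0.
Proof.
  intros Hc Hzero u v Hu Hv Hfu. apply Rnot_lt_le. intros Hfv.
  destruct (Req_dec (f u) 0) as [E | E].
  { rewrite (Hzero u Hu E v Hv) in Hfv. lra. }
  enough (exists z, 0 < z /\ f z = 0) as [z [Hz Hfz]].
  { rewrite (Hzero z Hz Hfz v Hv) in Hfv. lra. }
  destruct (Rlt_or_le u v) as [Huv | Hvu].
  - destruct (Ranalysis5.IVT_interv f u v) as [z [Hz Hfz]]; try lra.
    + intros t Ht; apply Hc; lra.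
    + exists z. split; [lra | exact Hfz].
  - destruct (Ranalysis5.IVT_interv (fun t => - f t) v u) as [z [Hz Hfz]]; try lra.
    + intros t Ht. apply continuity_pt_opp, Hc. lra.
    + destruct (Req_dec u v) as [-> | ]; lra.
    + exists z. split; lra.
Qed.

Lemma nonincreasing_bounded_lim_at_right0 (f : R -> R) (B : R) :
  (forall s t, 0 < s <= t -> f t <= f s) -> (forall t, 0 < t <= 1 -> f t <= B) ->
  exists a, filterlim f (at_right 0) (locally a) /\ forall t, 0 < t -> f t <= a.
Proof.
  intros Hdec HB.
  set (E z := exists s, 0 < s <= 1 /\ z = f s).
  destruct (completeness E) as [a [Hub Hlub]].
  { exists B. intros z [s [Hs ->]]. exact (HB s Hs). }
  { exists (f 1), 1. split; [lra | reflexivity]. }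
  assert (Hle : forall t, 0 < t -> f t <= a).
  { intros t Ht. destruct (Rle_or_lt t 1).
    - apply Hub. exists t. split; [lra | reflexivity].
    - apply Rle_trans with (f 1); [apply Hdec; lra |].
      apply Hub. exists 1. split; [lra | reflexivity]. }
  exists a. split; [| exact Hle].
  apply filterlim_locally. intros eps.
  destruct (classic (exists s, 0 < s <= 1 /\ a - eps < f s)) as [[s [Hs Hfs]] | Hnone].
  - apply (at_right0_interval _ s); [lra |]. intros t Ht.
    pose proof (Hdec t s ltac:(lra)). pose proof (Hle t (proj1 Ht)).
    change (Rabs (f t - a) < eps). apply Rabs_def1; lra.
  - exfalso. enough (a <= a - eps) by (pose proof (cond_pos eps); lra).
    apply Hlub. intros z [s [Hs ->]]. apply Rnot_lt_le. intros Hlt. apply Hnone. exists s. auto.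
Qed.

(** * The power nonlinearity *)

Lemma rpow_nonneg (a p : R) : 0 <= rpow a p.
Proof. unfold rpow. destruct (Rle_dec a 0); [lra | left; apply exp_pos]. Qed.

Lemma rpow_pos_base (a p : R) : 0 < a -> rpow a p = Rpower a p.
Proof. intros Ha. unfold rpow. destruct (Rle_dec a 0); [lra | reflexivity]. Qed.

Lemma rpow_0 (p : R) : rpow 0 p = 0.
Proof. unfold rpow. destruct (Rle_dec 0 0); [reflexivity | lra]. Qed.

Lemma rpow_le_compat (a b p : R) : 0 <= p -> 0 <= a <= b -> rpow a p <= rpow b p.
Proof.
  intros Hp Hab. unfold rpow at 1. destruct (Rle_dec a 0); [apply rpow_nonneg |].
  rewrite rpow_pos_base by lra. apply Rle_Rpower_l; lra.
Qed.

Lemma rpow_exp_mul (s a p : R) : rpow (exp s * a) p = exp (p * s) * rpow a p.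
Proof.
  pose proof (exp_pos s). destruct (Rle_or_lt a 0) as [Ha | Ha].
  - unfold rpow. destruct (Rle_dec a 0); [| lra].
    destruct (Rle_dec (exp s * a) 0); [ring | nra].
  - rewrite !rpow_pos_base by nra.
    rewrite <- Rpower_mult_distr by lra. f_equal.
    unfold Rpower. rewrite ln_exp. f_equal; ring.
Qed.

Lemma rpow_sub_le (a b p M : R) : 1 <= p -> 0 <= b <= a -> a <= M ->
  rpow a p - rpow b p <= p * Rpower (M + 1) (p - 1) * (a - b).
Proof.
  intros Hp Hab HM.
  assert (Hslope : forall u, 0 < u <= M -> Rpower u (p - 1) <= Rpower (M + 1) (p - 1))
    by (intros u Hu; apply Rle_Rpower_l; lra).
  destruct (Req_dec b 0) as [-> | Hb].
  - rewrite rpow_0. destruct (proj2 Hab) as [Ha | <-]; [| rewrite rpow_0; lra].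
    rewrite rpow_pos_base by lra.
    replace (Rpower a p) with (a * Rpower a (p - 1))
      by (rewrite <- (Rpower_1 a) at 1 by lra; rewrite <- Rpower_plus; f_equal; ring).
    pose proof (Hslope a ltac:(lra)). pose proof (exp_pos ((p - 1) * ln (M + 1))).
    fold (Rpower (M + 1) (p - 1)) in *.
    assert (0 <= (p - 1) * (Rpower (M + 1) (p - 1) * a)) by (apply Rmult_le_pos; nra).
    nra.
  - rewrite !rpow_pos_base by lra.
    apply (increment_le (fun u => Rpower u p) (fun u => p * Rpower u (p - 1))); [lra | |].
    + intros t Ht. apply is_derive_Reals, derivable_pt_lim_power, Ht.
    + intros t Ht. apply Rmult_le_compat_l; [lra |]. apply Hslope; lra.
Qed.

Lemma rpow_lipschitz (a b p M : R) : 1 <= p -> 0 <= a <= M -> 0 <= b <= M ->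
  Rabs (rpow a p - rpow b p) <= p * Rpower (M + 1) (p - 1) * Rabs (a - b).
Proof.
  intros Hp Ha Hb. destruct (Rle_or_lt b a) as [Hba | Hab].
  - pose proof (rpow_le_compat b a p ltac:(lra) ltac:(lra)).
    rewrite !Rabs_right by lra. apply rpow_sub_le; lra.
  - pose proof (rpow_le_compat a b p ltac:(lra) ltac:(lra)).
    rewrite !Rabs_left1 by lra. pose proof (rpow_sub_le b a p M). nra.
Qed.

(** * Uniqueness for the initial value problem *)

Lemma energy_estimate (c L a r D y2 X X1 X2 : R) :
  0 < c -> 0 <= L -> 0 <= r -> 0 <= y2 <= a -> Rabs D <= L * Rabs X ->
  2 * X * X1 + 2 * X1 * X2 + 2 * X2 * (- c * r * X2 - c * D * y2)
  <= (2 + c * L * a) * (X * X + X1 * X1 + X2 * X2).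
Proof.
  intros Hc HL Hr Hy HD.
  assert (Hcross : - (D * X2) * y2 <= L * a * (Rabs X * Rabs X2)).
  { assert (- (D * X2) <= L * Rabs X * Rabs X2).
    { apply Rle_trans with (Rabs D * Rabs X2).
      - rewrite <- Rabs_mult, <- Rabs_Ropp. apply Rle_abs.
      - apply Rmult_le_compat_r; [apply Rabs_pos | exact HD]. }
    assert (0 <= L * Rabs X * Rabs X2)
      by (apply Rmult_le_pos; [apply Rmult_le_pos |]; auto using Rabs_pos).
    nra. }
  assert (Hamgm : 2 * (Rabs X * Rabs X2) <= X * X + X2 * X2).
  { assert (Rabs X * Rabs X = X * X) by (rewrite <- Rabs_mult; apply Rabs_right; nra).
    assert (Rabs X2 * Rabs X2 = X2 * X2) by (rewrite <- Rabs_mult; apply Rabs_right; nra).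
    pose proof (Rle_0_sqr (Rabs X - Rabs X2)). unfold Rsqr in *. nra. }
  assert (0 <= c * L * a) by (apply Rmult_le_pos; [apply Rmult_le_pos |]; lra).
  assert (0 <= c * r * (X2 * X2)) by (apply Rmult_le_pos; nra).
  assert (c * (- (D * X2) * y2) <= c * (L * a * (Rabs X * Rabs X2)))
    by (apply Rmult_le_compat_l; lra).
  pose proof (Rle_0_sqr (X - X1)). pose proof (Rle_0_sqr (X1 - X2)). unfold Rsqr in *.
  nra.
Qed.

Definition solves_ode (p c : R) (x x1 x2 x3 : R -> R) : Prop :=
  forall t, 0 < t ->
    is_derive x t (x1 t) /\ is_derive x1 t (x2 t) /\ is_derive x2 t (x3 t) /\
    x3 t + c * rpow (x t) p * x2 t = 0.

(* A solution with initial data (x, x', x'')(0+) = (0, 0, a); the sign conditions on x, x' and x''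
   hold for every solution of the boundary value problem and give the uniform Lipschitz bounds
   needed for uniqueness. *)
Record ivp_solution (p c a : R) (x x1 x2 x3 : R -> R) : Prop := {
  ivp_ode : solves_ode p c x x1 x2 x3;
  ivp_x_nonneg : forall t, 0 < t -> 0 <= x t;
  ivp_x_lim : filterlim x (at_right 0) (locally 0);
  ivp_x1_lim : filterlim x1 (at_right 0) (locally 0);
  ivp_x2_lim : filterlim x2 (at_right 0) (locally a);
  ivp_x2_bounds : forall t, 0 < t -> 0 < x2 t <= a;
  ivp_x1_nonneg : forall t, 0 < t -> 0 <= x1 t
}.

Lemma ivp_x_bounds (p c a : R) (x x1 x2 x3 : R -> R) :
  ivp_solution p c a x x1 x2 x3 -> forall s t, 0 < s <= t -> 0 <= x s <= x t.
Proof.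
  intros Hx s t Hst. split; [apply (ivp_x_nonneg _ _ _ _ _ _ _ Hx); lra |].
  enough (0 * (t - s) <= x t - x s) by lra.
  apply (increment_ge x x1); [exact Hst | |].
  - intros u Hu. apply (ivp_ode _ _ _ _ _ _ _ Hx u Hu).
  - intros u Hu. apply (ivp_x1_nonneg _ _ _ _ _ _ _ Hx). lra.
Qed.

Lemma is_derive_sqr_diff (f g : R -> R) (t df dg : R) :
  is_derive f t df -> is_derive g t dg ->
  is_derive (fun u => (f u - g u) * (f u - g u)) t (2 * (f t - g t) * (df - dg)).
Proof.
  intros Hf Hg. pose proof (is_derive_minus _ _ _ _ _ Hf Hg) as Hd.
  apply (is_derive_eq _ _ _ _ (is_derive_mult _ _ _ _ _ Hd Hd Rmult_comm)).
  unfold minus, opp, plus, mult; simpl; ring.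
Qed.

Theorem ivp_unique (p c a : R) (x x1 x2 x3 y y1 y2 y3 : R -> R) :
  1 <= p -> 0 < c ->
  ivp_solution p c a x x1 x2 x3 -> ivp_solution p c a y y1 y2 y3 ->
  forall t, 0 < t -> x t = y t.
Proof.
  intros Hp Hc Hx Hy t Ht.
  pose proof Hx as [Sx _ Lx Lx1 Lx2 Bx2 _]. pose proof Hy as [Sy _ Ly Ly1 Ly2 By2 _].
  set (M := Rmax (x t) (y t)).
  assert (HM : forall s, 0 < s <= t -> 0 <= x s <= M /\ 0 <= y s <= M).
  { intros s Hs. pose proof (ivp_x_bounds _ _ _ _ _ _ _ Hx s t Hs).
    pose proof (ivp_x_bounds _ _ _ _ _ _ _ Hy s t Hs).
    pose proof (Rmax_l (x t) (y t)). pose proof (Rmax_r (x t) (y t)). unfold M. lra. }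
  set (L := p * Rpower (M + 1) (p - 1)).
  assert (HL : 0 <= L) by (apply Rmult_le_pos; [lra | left; apply exp_pos]).
  assert (Ha : 0 < a) by (destruct (Bx2 1); lra).
  set (S u := (x u - y u) * (x u - y u) + (x1 u - y1 u) * (x1 u - y1 u)
                + (x2 u - y2 u) * (x2 u - y2 u)).
  set (dS u := 2 * (x u - y u) * (x1 u - y1 u) + 2 * (x1 u - y1 u) * (x2 u - y2 u)
                 + 2 * (x2 u - y2 u) * (x3 u - y3 u)).
  assert (HS : S t = 0).
  { apply (gronwall_vanishing S dS (2 + c * L * a) t Ht).
    - assert (0 <= c * L * a) by (apply Rmult_le_pos; [apply Rmult_le_pos |]; lra). lra.
    - intros u Hu.
      destruct (Sx u Hu) as [Dx [Dx1 [Dx2 _]]]. destruct (Sy u Hu) as [Dy [Dy1 [Dy2 _]]].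
      apply (is_derive_eq _ _ _ _ (is_derive_plus _ _ _ _ _
        (is_derive_plus _ _ _ _ _ (is_derive_sqr_diff _ _ _ _ _ Dx Dy)
                                  (is_derive_sqr_diff _ _ _ _ _ Dx1 Dy1))
        (is_derive_sqr_diff _ _ _ _ _ Dx2 Dy2))).
      unfold dS, plus; simpl; ring.
    - intros u Hu.
      destruct (Sx u ltac:(lra)) as [_ [_ [_ Ox]]]. destruct (Sy u ltac:(lra)) as [_ [_ [_ Oy]]].
      unfold dS, S.
      replace (x3 u - y3 u) with (- c * rpow (x u) p * (x2 u - y2 u)
                                  - c * (rpow (x u) p - rpow (y u) p) * y2 u) by lra.
      apply energy_estimate; [lra | exact HL | apply rpow_nonneg | destruct (By2 u); lra |].
      apply rpow_lipschitz; [exact Hp | apply HM; lra | apply HM; lra].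
    - intros u _. unfold S.
      pose proof (Rle_0_sqr (x u - y u)). pose proof (Rle_0_sqr (x1 u - y1 u)).
      pose proof (Rle_0_sqr (x2 u - y2 u)). unfold Rsqr in *. lra.
    - replace (locally 0) with (locally ((0 - 0) * (0 - 0) + (0 - 0) * (0 - 0) + (a - a) * (a - a)))
        by (f_equal; ring).
      repeat apply filterlim_Rplus_fun;
        apply filterlim_Rmult_fun; apply filterlim_Rminus_fun; assumption. }
  unfold S in HS.
  pose proof (Rle_0_sqr (x t - y t)). pose proof (Rle_0_sqr (x1 t - y1 t)).
  pose proof (Rle_0_sqr (x2 t - y2 t)). unfold Rsqr in *.
  assert (Hsq : (x t - y t) * (x t - y t) = 0) by lra.
  destruct (Rmult_integral _ _ Hsq); lra.
Qed.

(** * Shape of a solution of the boundary value problem *)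

Section SolutionShape.

Variables (p c beta : R) (x x1 x2 x3 : R -> R).
Hypotheses (hp : 1 <= p) (hc : 0 < c) (hb : 0 < beta).
Hypothesis x_nonneg : forall t, 0 <= t -> 0 <= x t.
Hypothesis x_ode : solves_ode p c x x1 x2 x3.
Hypothesis x_at_0 : x 0 = 0.
Hypothesis x_slope_0 : filterlim (fun h => (x h - x 0) / h) (at_right 0) (locally 0).
Hypothesis x1_at_pinfty : is_lim x1 p_infty beta.

Let x_deriv t (Ht : 0 < t) : is_derive x t (x1 t) := proj1 (x_ode t Ht).
Let x1_deriv t (Ht : 0 < t) : is_derive x1 t (x2 t) := proj1 (proj2 (x_ode t Ht)).
Let x2_deriv t (Ht : 0 < t) : is_derive x2 t (x3 t) := proj1 (proj2 (proj2 (x_ode t Ht))).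

Lemma x3_eq t : 0 < t -> x3 t = - (c * rpow (x t) p) * x2 t.
Proof. intros Ht. destruct (x_ode t Ht) as [_ [_ [_ Hode]]]. lra. Qed.

Lemma x_quotient_lim : filterlim (fun h => x h / h) (at_right 0) (locally 0).
Proof.
  apply (filterlim_ext (fun h => (x h - x 0) / h)); [| exact x_slope_0].
  intros h. rewrite x_at_0, Rminus_0_r. reflexivity.
Qed.

Lemma x_lim : filterlim x (at_right 0) (locally 0).
Proof.
  replace (locally 0) with (locally (0 * 0)) by (f_equal; ring).
  apply (filterlim_ext_loc (fun h => h * (x h / h))).
  - apply (at_right0_interval _ 1); [lra |]. intros h Hh. field. lra.
  - exact (filterlim_Rmult_fun _ _ _ _ filterlim_at_right0_id x_quotient_lim).
Qed.

Lemma x2_zero_propagation t0 : 0 < t0 -> x2 t0 = 0 -> forall u, 0 < u -> x2 u = 0.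
Proof.
  apply (linear_ode_zero_propagation x2 x3 (fun t => c * rpow (x t) p)).
  - exact x2_deriv.
  - exact x3_eq.
  - intros t _. pose proof (rpow_nonneg (x t) p). nra.
  - intros a b Hab. destruct (continuity_ab_maj x a b) as [tmax [Hmax _]]; [lra | |].
    + intros t Ht. apply continuity_pt_filterlim, (ex_derive_continuous x).
      exists (x1 t). apply x_deriv. lra.
    + exists (c * rpow (x tmax) p). intros t Ht. apply Rmult_le_compat_l; [lra |].
      apply rpow_le_compat; [lra |]. split; [apply x_nonneg; lra | exact (Hmax t Ht)].
Qed.

Lemma x2_pos t : 0 < t -> 0 < x2 t.
Proof.
  intros Ht. apply Rnot_le_lt. intros Hneg.
  assert (Hall : forall v, 0 < v -> x2 v <= 0).
  { intros v Hv. apply (nonpos_propagates x2) with t; auto.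
    - intros s Hs. apply continuity_pt_filterlim, (ex_derive_continuous x2).
      exists (x3 s). exact (x2_deriv s Hs).
    - exact x2_zero_propagation. }
  assert (Hx1 : forall u, 0 < u -> beta <= x1 u).
  { intros u Hu.
    refine (is_lim_le_loc x1 (fun _ => x1 u) p_infty beta (x1 u) _ x1_at_pinfty (is_lim_const _ _)).
    exists u. intros w Hw.
    enough (x1 w - x1 u <= 0 * (w - u)) by lra.
    apply (increment_le x1 x2); [lra | exact x1_deriv |]. intros s Hs. apply Hall. lra. }
  assert (Hlow : Rbar_le beta 0).
  { refine (filterlim_le (fun _ => beta) (fun h => x h / h) beta 0 _
              (filterlim_const beta) x_quotient_lim).
    apply (at_right0_interval _ 1); [lra |]. intros h Hh.
    apply (Rmult_le_reg_r h); [lra |]. replace (x h / h * h) with (x h) by (field; lra).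
    apply (ge_from_0_of_deriv_ge x x1); [lra | exact x_lim | exact x_deriv |].
    intros s Hs. apply Hx1. lra. }
  simpl in Hlow. lra.
Qed.

Lemma x2_nonincreasing s t : 0 < s <= t -> x2 t <= x2 s.
Proof.
  intros Hst. enough (x2 t - x2 s <= 0 * (t - s)) by lra.
  apply (increment_le x2 x3); [exact Hst | exact x2_deriv |]. intros u Hu.
  rewrite x3_eq by lra. pose proof (rpow_nonneg (x u) p). pose proof (x2_pos u ltac:(lra)).
  assert (0 <= c * rpow (x u) p * x2 u) by (apply Rmult_le_pos; [apply Rmult_le_pos |]; lra).
  lra.
Qed.

Lemma x1_nondecreasing s t : 0 < s <= t -> x1 s <= x1 t.
Proof.
  intros Hst. enough (0 * (t - s) <= x1 t - x1 s) by lra.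
  apply (increment_ge x1 x2); [exact Hst | exact x1_deriv |]. intros u Hu.
  pose proof (x2_pos u ltac:(lra)). lra.
Qed.

Lemma x1_le_beta t : 0 < t -> x1 t <= beta.
Proof.
  intros Ht.
  refine (is_lim_le_loc (fun _ => x1 t) x1 p_infty (x1 t) beta _ (is_lim_const _ _) x1_at_pinfty).
  exists t. intros w Hw. apply x1_nondecreasing. lra.
Qed.

Lemma x2_bounded_near_0 t : 0 < t <= 1 -> x2 t <= x2 1 * exp (c * rpow beta p).
Proof.
  intros Ht. set (K := c * rpow beta p).
  assert (HK : 0 <= K) by (pose proof (rpow_nonneg beta p); unfold K; nra).
  (* x2' >= -K x2, because x <= beta on (0, 1] *)
  assert (Hgrowth : - x2 1 * exp (- - K * 1) <= - x2 t * exp (- - K * t)).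
  { apply (exp_weighted_nonincreasing (fun u => - x2 u) (fun u => - x3 u)); [lra | |].
    - intros u Hu. apply (is_derive_opp x2), x2_deriv, Hu.
    - intros u Hu. rewrite x3_eq by lra.
      assert (Hxu : x u <= beta).
      { apply Rle_trans with (beta * u); [| nra].
        apply (le_from_0_of_deriv_le x x1); [lra | exact x_lim | exact x_deriv |].
        intros s Hs. apply x1_le_beta. lra. }
      assert (rpow (x u) p <= rpow beta p)
        by (apply rpow_le_compat; [lra | split; [apply x_nonneg; lra | exact Hxu]]).
      pose proof (x2_pos u ltac:(lra)).
      assert (0 <= c * (rpow beta p - rpow (x u) p) * x2 u)
        by (apply Rmult_le_pos; [apply Rmult_le_pos |]; lra).
      unfold K. lra. }
  replace (- - K) with K in Hgrowth by ring. rewrite Rmult_1_r in Hgrowth.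
  pose proof (exp_ineq1_le (K * t)). pose proof (x2_pos t ltac:(lra)).
  assert (0 <= K * t) by nra.
  assert (x2 t * 1 <= x2 t * exp (K * t)) by (apply Rmult_le_compat_l; lra).
  lra.
Qed.

Lemma x1_lim (a : R) :
  (forall t, 0 < t -> x2 t <= a) -> filterlim x1 (at_right 0) (locally 0).
Proof.
  intros Ha.
  apply (filterlim_le_le (fun u => x u / u) x1 (fun u => x u / u + a * u) 0).
  - apply (at_right0_interval _ 1); [lra |]. intros u Hu. split.
    + apply (Rmult_le_reg_r u); [lra |]. replace (x u / u * u) with (x u) by (field; lra).
      apply (le_from_0_of_deriv_le x x1); [lra | exact x_lim | exact x_deriv |].
      intros s Hs. apply x1_nondecreasing. lra.
    + enough ((x1 u - a * u) * u <= x u).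
      { apply (Rmult_le_reg_r u); [lra |]. replace ((x u / u + a * u) * u) with (x u + a * u * u)
          by (field; lra). nra. }
      apply (ge_from_0_of_deriv_ge x x1); [lra | exact x_lim | exact x_deriv |].
      intros s Hs.
      assert (x1 u - x1 s <= a * (u - s))
        by (apply (increment_le x1 x2); [lra | exact x1_deriv | intros w Hw; apply Ha; lra]).
      assert (0 <= a) by (pose proof (x2_pos u ltac:(lra)); pose proof (Ha u ltac:(lra)); lra).
      nra.
  - exact x_quotient_lim.
  - replace (Rbar_locally 0) with (locally (0 + a * 0)) by (now rewrite Rmult_0_r, Rplus_0_r).
    apply filterlim_Rplus_fun; [exact x_quotient_lim |].
    exact (filterlim_Rmult_fun _ _ _ _ (filterlim_const a) filterlim_at_right0_id).
Qed.

Theorem solution_is_ivp_solution : exists a, ivp_solution p c a x x1 x2 x3.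
Proof.
  destruct (nonincreasing_bounded_lim_at_right0 x2 (x2 1 * exp (c * rpow beta p)))
    as [a [Hlim Hle]]; [exact x2_nonincreasing | exact x2_bounded_near_0 |].
  exists a. split.
  - exact x_ode.
  - intros t Ht. apply x_nonneg. lra.
  - exact x_lim.
  - exact (x1_lim a Hle).
  - exact Hlim.
  - intros t Ht. split; [apply x2_pos | apply Hle]; exact Ht.
  - intros t Ht.
    refine (filterlim_le x1 (fun _ => x1 t) 0 (x1 t) _ (x1_lim a Hle) (filterlim_const _)).
    apply (at_right0_interval _ t Ht). intros s Hs. apply x1_nondecreasing. lra.
Qed.

End SolutionShape.

(** * Scaling *)

Lemma is_derive_scal_comp_lin (f : R -> R) (k m t df : R) :
  is_derive f (m * t) df -> is_derive (fun u => k * f (m * u)) t (k * (m * df)).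
Proof.
  intros Hf. apply is_derive_scal.
  apply (is_derive_eq _ _ _ _ (is_derive_comp f (fun u => m * u) t df m Hf
    ltac:(auto_derive; [auto | ring]))).
  reflexivity.
Qed.

Lemma filterlim_at_right0_scal_comp (f : R -> R) (k m L : R) :
  0 < m -> filterlim f (at_right 0) (locally L) ->
  filterlim (fun t => k * f (m * t)) (at_right 0) (locally (k * L)).
Proof.
  intros Hm Hf. apply (filterlim_Rmult_fun _ _ _ _ (filterlim_const k)).
  exact (filterlim_comp _ _ _ _ f _ _ _ (filterlim_at_right0_scal m Hm) Hf).
Qed.

Lemma ivp_solution_rescale (p c a s : R) (x x1 x2 x3 : R -> R) :
  ivp_solution p c a x x1 x2 x3 ->
  ivp_solution p c (exp s * exp (p * s) * exp (p * s) * a)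
    (fun t => exp s * x (exp (p * s) * t))
    (fun t => exp s * exp (p * s) * x1 (exp (p * s) * t))
    (fun t => exp s * exp (p * s) * exp (p * s) * x2 (exp (p * s) * t))
    (fun t => exp s * exp (p * s) * exp (p * s) * exp (p * s) * x3 (exp (p * s) * t)).
Proof.
  intros [Sx Px Lx Lx1 Lx2 Bx2 Bx1].
  set (l := exp s). set (m := exp (p * s)).
  assert (Hl : 0 < l) by apply exp_pos. assert (Hm : 0 < m) by apply exp_pos.
  assert (Hmt : forall t, 0 < t -> 0 < m * t) by (intros; apply Rmult_lt_0_compat; lra).
  split.
  - intros t Ht. destruct (Sx (m * t) (Hmt t Ht)) as [D0 [D1 [D2 Hode]]].
    split; [| split; [| split]].
    + apply (is_derive_eq _ _ _ _ (is_derive_scal_comp_lin _ _ _ _ _ D0)). ring.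
    + apply (is_derive_eq _ _ _ _ (is_derive_scal_comp_lin _ _ _ _ _ D1)). ring.
    + apply (is_derive_eq _ _ _ _ (is_derive_scal_comp_lin _ _ _ _ _ D2)). ring.
    + unfold l. rewrite rpow_exp_mul. fold m.
      transitivity (exp s * m * m * m * (x3 (m * t) + c * rpow (x (m * t)) p * x2 (m * t)));
        [ring |].
      rewrite Hode. ring.
  - intros t Ht. apply Rmult_le_pos; [lra | apply Px, Hmt, Ht].
  - rewrite <- (Rmult_0_r l) at 2. exact (filterlim_at_right0_scal_comp _ _ _ _ Hm Lx).
  - rewrite <- (Rmult_0_r (l * m)) at 2. exact (filterlim_at_right0_scal_comp _ _ _ _ Hm Lx1).
  - exact (filterlim_at_right0_scal_comp _ _ _ _ Hm Lx2).
  - intros t Ht. destruct (Bx2 _ (Hmt t Ht)).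
    assert (0 < l * m * m) by (repeat apply Rmult_lt_0_compat; lra).
    split; [nra | apply Rmult_le_compat_l; lra].
  - intros t Ht. pose proof (Bx1 _ (Hmt t Ht)). apply Rmult_le_pos; [nra | lra].
Qed.

Lemma exists_rescaling (p a b : R) :
  0 <= p -> 0 < a -> 0 < b -> exists s, exp s * exp (p * s) * exp (p * s) * a = b.
Proof.
  intros Hp Ha Hb. exists (ln (b / a) / (1 + 2 * p)).
  rewrite <- !exp_plus.
  replace (_ + _ + _) with (ln (b / a)) by (field; lra).
  rewrite exp_ln by (apply Rdiv_lt_0_compat; lra). field. lra.
Qed.

Lemma exp_mul_exp_scal_eq_1 (p s : R) : 0 <= p -> exp s * exp (p * s) = 1 -> s = 0.
Proof.
  intros Hp H. rewrite <- exp_plus, <- exp_0 in H. apply exp_inv in H.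
  replace (s + p * s) with ((1 + p) * s) in H by ring.
  destruct (Rmult_integral _ _ H); lra.
Qed.

Lemma is_derive_agree_on_pos (f g : R -> R) (t l l' : R) :
  0 < t -> (forall u, 0 < u -> f u = g u) -> is_derive f t l -> is_derive g t l' -> l = l'.
Proof.
  intros Ht Hfg Hf Hg. rewrite <- (is_derive_unique _ _ _ Hf), <- (is_derive_unique _ _ _ Hg).
  apply Derive_ext_loc. apply (locally_interval _ t 0 p_infty); simpl; [exact Ht | exact I |].
  intros u Hu _. apply Hfg, Hu.
Qed.

Lemma is_lim_pinfty_scal_comp (f : R -> R) (k m L : R) :
  0 < m -> is_lim f p_infty L -> is_lim (fun t => k * f (m * t)) p_infty (k * L).
Proof.
  intros Hm Hf. apply (is_lim_scal_l (fun t => f (m * t)) k p_infty L).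
  apply (is_lim_ext (fun t => f (m * t + 0))); [intros t; now rewrite Rplus_0_r|].
  apply is_lim_comp_lin; [| lra].
  replace (Rbar_plus (Rbar_mult m p_infty) 0) with p_infty; [exact Hf|].
  simpl. destruct (Rle_dec 0 m) as [H|H]; [destruct (Rle_lt_or_eq_dec 0 m H)|];
    reflexivity || lra.
Qed.

Lemma is_lim_pinfty_agree_on_pos (f g : R -> R) (L L' : R) :
  (forall u, 0 < u -> f u = g u) -> is_lim f p_infty L -> is_lim g p_infty L' -> L = L'.
Proof.
  intros Hfg Hf Hg.
  assert (Hf' : is_lim g p_infty L).
  { apply (is_lim_ext_loc f); [| exact Hf]. exists 0. exact Hfg. }
  apply is_lim_unique in Hf', Hg. rewrite Hf' in Hg. now injection Hg.
Qed.

Theorem theorem2 (p c beta : R) (hp : 1 <= p) (hc : 0 < c) (hb : 0 < beta)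
  (x y : R -> R) :
  is_solution p c beta x -> is_solution p c beta y ->
  forall t, 0 <= t -> x t = y t.
Proof.
  intros [x1 [x2 [x3 [Px [Sx [X0 [Qx Lx]]]]]]] [y1 [y2 [y3 [Py [Sy [Y0 [Qy Ly]]]]]]] t [Ht | <-];
    [| now rewrite X0, Y0].
  destruct (solution_is_ivp_solution p c beta x x1 x2 x3 hp hc hb Px Sx X0 Qx Lx) as [a Hx].
  destruct (solution_is_ivp_solution p c beta y y1 y2 y3 hp hc hb Py Sy Y0 Qy Ly) as [b Hy].
  assert (Ha : 0 < a) by (destruct (ivp_x2_bounds _ _ _ _ _ _ _ Hx 1); lra).
  assert (Hb : 0 < b) by (destruct (ivp_x2_bounds _ _ _ _ _ _ _ Hy 1); lra).
  destruct (exists_rescaling p a b ltac:(lra) Ha Hb) as [s Hs].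
  pose proof (ivp_solution_rescale p c a s x x1 x2 x3 Hx) as Hxs. rewrite Hs in Hxs.
  pose proof (ivp_unique p c b _ _ _ _ y y1 y2 y3 hp hc Hxs Hy) as Hxy.
  assert (Hs0 : s = 0).
  { apply (exp_mul_exp_scal_eq_1 p s); [lra |].
    assert (Hx1y1 : forall u, 0 < u -> exp s * exp (p * s) * x1 (exp (p * s) * u) = y1 u).
    { intros u Hu. apply (is_derive_agree_on_pos _ _ u _ _ Hu Hxy).
      - exact (proj1 (ivp_ode _ _ _ _ _ _ _ Hxs u Hu)).
      - exact (proj1 (Sy u Hu)). }
    pose proof (is_lim_pinfty_agree_on_pos _ _ _ _ Hx1y1
      (is_lim_pinfty_scal_comp x1 _ _ _ (exp_pos (p * s)) Lx) Ly).
    apply (Rmult_eq_reg_r beta); lra. }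
  rewrite <- (Hxy t Ht), Hs0, Rmult_0_r, exp_0. ring_simplify (1 * t). ring.
Qed.
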